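(* The representable left $k[\Delta_{a,\mathrm{inj}}]$-modules $P_n:=k[\Delta_{a,\mathrm{inj}}]([n],-)$, $n\ge0$, with differentials $P_n\to P_{n-1}$ given by precomposition with $\sum_{i=0}^n(-1)^i\delta^i$, and with augmentation $\varepsilon\colon P_0\to k_\bullet[0]$ equal to $1$ on basis morphisms in nonnegative degrees and $0$ at $[-1]$, form a projective resolution of $k_\bullet[0]$ in the category of left $k[\Delta_{a,\mathrm{inj}}]$-modules.
   Context: $k$ is a field; $k[\mathcal C]$ is the $k$-linearization of a small category. A left module over a $k$-linear category is a $k$-linear functor to $\mathrm{Vect}_k$. $\Delta_{a,\mathrm{inj}}$ has objects $[n]=\{0<\dots<n\}$, $n\ge0$, and $[-1]=\varnothing$, with injective order-preserving maps as morphisms; $\delta^i\colon[n-1]\to[n]$ ($0\le i\le n$) omits $i$. $k_\bullet[0]$ is the left $k[\Delta_{a,\mathrm{inj}}]$-module with value $k$ at $[n]$ for $n\ge0$ and $0$ at $[-1]$, every morphism between nonnegative objects acting by the identity (it is the left Kan extension of the constant module $k$ on $\Delta_{\mathrm{inj}}$ along the inclusion $\Delta_{\mathrm{inj}}\hookrightarrow\Delta_{a,\mathrm{inj}}$). *)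

From mathcomp Require Import all_boot all_order all_algebra.
Set Implicit Arguments. Unset Strict Implicit. Unset Printing Implicit Defensive.
Import GRing.Theory.
Local Open Scope ring_scope.

(* Objects of Delta_{a,inj} are encoded by their cardinality N : nat:
   N = n+1 encodes [n] = {0<...<n} (n >= 0), and N = 0 encodes [-1] = empty. *)

(* Injective order-preserving maps 'I_A -> 'I_B (= strictly increasing maps). *)
Definition incr (A B : nat) (f : {ffun 'I_A -> 'I_B}) : bool :=
  [forall i : 'I_A, forall j : 'I_A, (i < j)%N ==> (f i < f j)%N].

Definition Hom (A B : nat) := {f : {ffun 'I_A -> 'I_B} | incr f}.

Section Modules.
Variable k : fieldType.

(* A left k[Delta_{a,inj}]-module: a k-linear functor to Vect_k, given by its
   values on objects and the action of basis morphisms (extended linearly). *)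
Definition is_lmodule (M : nat -> lmodType k)
  (act : forall A B, Hom A B -> M A -> M B) : Prop :=
  [/\ (forall A B (g : Hom A B) (a : k) (x y : M A),
          act A B g (a *: x + y) = a *: act A B g x + act A B g y),
      (forall A (g : Hom A A), (forall i, sval g i = i) -> forall x, act A A g x = x)
    & (forall A B C (f : Hom A B) (g : Hom B C) (h : Hom A C),
          (forall i, sval h i = sval g (sval f i)) ->
          forall x, act A C h x = act B C g (act A B f x))].

Definition is_hom (M N : nat -> lmodType k)
  (actM : forall A B, Hom A B -> M A -> M B)
  (actN : forall A B, Hom A B -> N A -> N B)
  (p : forall A, M A -> N A) : Prop :=
  (forall A (a : k) (x y : M A), p A (a *: x + y) = a *: p A x + p A y) /\
  (forall A B (g : Hom A B) (x : M A), p B (actM A B g x) = actN A B g (p A x)).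

(* Projective object in the category of left modules: morphisms lift along
   epimorphisms (= objectwise surjective morphisms). *)
Definition projective (P : nat -> lmodType k)
  (actP : forall A B, Hom A B -> P A -> P B) : Prop :=
  forall (M N : nat -> lmodType k)
    (actM : forall A B, Hom A B -> M A -> M B)
    (actN : forall A B, Hom A B -> N A -> N B),
  is_lmodule actM -> is_lmodule actN ->
  forall p : forall A, M A -> N A, is_hom actM actN p ->
  (forall A (y : N A), exists x, p A x = y) ->
  forall h : forall A, P A -> N A, is_hom actP actN h ->
  exists l : forall A, P A -> M A,
    is_hom actP actM l /\ forall A (x : P A), p A (l A x) = h A x.

(* The representable module P_n = k[Delta_{a,inj}]([n], -), n >= 0:
   value at the object of cardinality M is the free k-vector space on
   Hom (n+1) M, written as coordinate functions. *)
Definition Pval (n M : nat) : lmodType k := {ffun Hom n.+1 M -> k^o}.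

(* Action by postcomposition, extended linearly. *)
Definition Pact (n : nat) (A B : nat) (g : Hom A B) (v : Pval n A) : Pval n B :=
  [ffun h' : Hom n.+1 B =>
     \sum_(h : Hom n.+1 A | [forall j, sval h' j == sval g (sval h j)]) v h].

(* Differential P_{n+1} -> P_n: precomposition with sum_i (-1)^i delta^i,
   where delta^i : [n] -> [n+1] (cardinalities n+1 -> n+2) omits i,
   i.e. delta^i = lift i. Coordinate formula of the linear extension of
   f |-> sum_i (-1)^i f o delta^i. *)
Definition Pd (n M : nat) (v : Pval n.+1 M) : Pval n M :=
  [ffun h : Hom n.+1 M =>
     \sum_(f : Hom n.+2 M)
       \sum_(i : 'I_n.+2 | [forall j : 'I_n.+1, sval f (lift i j) == sval h j])
         (-1) ^+ i * v f].

(* k_bullet[0]: k (as 'rV_1) at [n], n >= 0, and 0 (as 'rV_0) at [-1];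
   morphisms between nonnegative objects act by the identity. *)
Definition K0val (M : nat) : lmodType k := 'rV[k]_(minn M 1).

Definition K0act (A B : nat) (g : Hom A B) (v : K0val A) : K0val B :=
  \row_(j < minn B 1) \sum_(i < minn A 1) v ord0 i.

Definition Peps (M : nat) (v : Pval 0 M) : K0val M :=
  \row_(j < minn M 1) \sum_(h : Hom 1 M) v h.

End Modules.

Arguments Pval {k} n M.
Arguments Pact {k} n A B g v.
Arguments Pd {k} n M v.
Arguments K0val {k} M.
Arguments K0act {k} A B g v.
Arguments Peps {k} M v.

(* At an object [m] with m >= 0, P_n([m]) is the free vector space on the n-simplices of
   the full simplex on {0, ..., m} (injective monotone maps [n] -> [m]), and the
   augmented complex is its augmented simplicial chain complex.  Coning from vertex 0 is
   a contracting homotopy: a simplex not containing 0 is sent to the simplex with 0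
   prepended, one containing 0 is sent to 0, and d s + s d = 1 (d s = 1 - [vertex 0] eps in
   degree 0).  At [-1] every P_n vanishes.  Projectivity of P_n is the Yoneda lemma: a
   morphism out of P_n is determined by the image of the identity of [n]. *)

From HB Require Import structures.
From mathcomp Require Import all_boot all_order all_algebra zify.
Set Implicit Arguments. Unset Strict Implicit. Unset Printing Implicit Defensive.
Import GRing.Theory.
Local Open Scope ring_scope.

Lemma incrP A B (f : {ffun 'I_A -> 'I_B}) :
  reflect {homo f : i j / (i < j)%N} (incr f).
Proof.
apply: (iffP forallP) => [H i j|H i]; first by move: (H i) => /forallP/(_ j)/implyP.
by apply/forallP => j; apply/implyP/H.
Qed.

Lemma hom_eq A B (f g : Hom A B) : sval f =1 sval g -> f = g.
Proof. by move=> fg; apply/val_inj/ffunP. Qed.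

Lemma hom_eqE A B (f g : Hom A B) : [forall j, sval f j == sval g j] = (f == g).
Proof. by apply/forallP/eqP => [fg | -> //]; apply: hom_eq => j; apply/eqP. Qed.

Lemma hom_le A B (f : Hom A B) : {homo sval f : i j / (i <= j)%N}.
Proof.
move=> i j; rewrite leq_eqVlt => /orP[/eqP/val_inj-> // | ltij].
exact/ltnW/(incrP _ (svalP f)).
Qed.

Lemma no_hom_to_empty A (f : Hom A.+1 0) : False.
Proof. by case: (sval f ord0). Qed.

Lemma hom_comp_subproof A B C (g : Hom B C) (f : Hom A B) :
  incr [ffun x => sval g (sval f x)].
Proof.
by apply/incrP => i j ij; rewrite !ffunE; apply/(incrP _ (svalP g))/(incrP _ (svalP f)).
Qed.

Definition hom_comp A B C (g : Hom B C) (f : Hom A B) : Hom A C :=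
  exist (@incr _ _) _ (hom_comp_subproof g f).

Lemma hom_compE A B C (g : Hom B C) (f : Hom A B) x :
  sval (hom_comp g f) x = sval g (sval f x).
Proof. exact: ffunE. Qed.

Lemma hom_id_subproof A : incr [ffun x : 'I_A => x].
Proof. by apply/incrP => i j; rewrite !ffunE. Qed.

Definition hom_id A : Hom A A := exist (@incr _ _) _ (hom_id_subproof A).

Lemma hom_comp1 A B (f : Hom A B) : hom_comp f (hom_id A) = f.
Proof. by apply: hom_eq => x; rewrite hom_compE ffunE. Qed.

Lemma coface_subproof n (i : 'I_n.+2) : incr [ffun x : 'I_n.+1 => lift i x].
Proof. by apply/incrP => x y; rewrite !ffunE /= !ltnNge leq_bump2. Qed.

Definition coface n (i : 'I_n.+2) : Hom n.+1 n.+2 :=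
  exist (@incr _ _) _ (coface_subproof i).

Lemma cofaceE n (i : 'I_n.+2) x : sval (coface i) x = lift i x.
Proof. exact: ffunE. Qed.

Lemma vertex0_subproof M : incr [ffun _ : 'I_1 => ord0 : 'I_M.+1].
Proof. by apply/incrP => i j; rewrite !ord1. Qed.

Definition vertex0 M : Hom 1 M.+1 := exist (@incr _ _) _ (vertex0_subproof M).

Lemma vertex0_eq M (f : Hom 1 M.+1) : sval f ord0 = ord0 -> f = vertex0 M.
Proof. by move=> f0; apply: hom_eq => x; rewrite ord1 f0 ffunE. Qed.

Lemma bump_bumpS i j y : (i <= j)%N -> bump j.+1 (bump i y) = bump i (bump j y).
Proof. by rewrite /bump => ij; repeat case: leqP => ?; lia. Qed.

Lemma lift_lift0 n (i : 'I_n.+1) (y : 'I_n) :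
  lift (lift ord0 i) (lift ord0 y) = lift ord0 (lift i y).
Proof. exact/val_inj/bumpS. Qed.

Lemma lift_lift0_ord0 n (i : 'I_n.+1) : lift (lift ord0 i) ord0 = ord0 :> 'I_n.+2.
Proof. exact: val_inj. Qed.

Section Cone.
Variables (m M : nat) (f : Hom m.+1 M.+1).

(* Prepends vertex 0 to the simplex f; this is a simplex iff f avoids vertex 0. *)
Definition cone_fun : {ffun 'I_m.+2 -> 'I_M.+1} :=
  [ffun j => if unlift ord0 j is Some j' then sval f j' else ord0].

Lemma cone_fun0 : cone_fun ord0 = ord0.
Proof. by rewrite ffunE unlift_none. Qed.

Lemma cone_funS j : cone_fun (lift ord0 j) = sval f j.
Proof. by rewrite ffunE liftK. Qed.

Lemma cone_fun_incr : (0 < sval f ord0)%N -> incr cone_fun.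
Proof.
move=> f0_gt0; apply/incrP => i j.
case: (unliftP ord0 i) => [i'|] ->; case: (unliftP ord0 j) => [j'|] ->.
- by rewrite !cone_funS !lift0 ltnS; apply: (incrP _ (svalP f)).
- by rewrite lift0.
- by rewrite cone_fun0 cone_funS => _; apply: leq_trans f0_gt0 (hom_le _ _).
- by rewrite ltnn.
Qed.

Lemma cone_fun_not_incr : sval f ord0 = ord0 -> ~~ incr cone_fun.
Proof.
move=> f0; apply/negP => /incrP/(_ ord0 (lift ord0 ord0) isT).
by rewrite cone_fun0 cone_funS f0 ltnn.
Qed.

Definition cone (f0_gt0 : (0 < sval f ord0)%N) : Hom m.+2 M.+1 :=
  exist (@incr _ _) _ (cone_fun_incr f0_gt0).

Lemma cone_coface0 f0_gt0 : hom_comp (cone f0_gt0) (coface ord0) = f.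
Proof. by apply: hom_eq => y; rewrite hom_compE cofaceE cone_funS. Qed.

End Cone.

Lemma cone_cofaceS m M (f : Hom m.+2 M.+1) (i : 'I_m.+2)
    (f0_gt0 : (0 < sval f ord0)%N) (fi0_gt0 : (0 < sval (hom_comp f (coface i)) ord0)%N) :
  hom_comp (cone f0_gt0) (coface (lift ord0 i)) = cone fi0_gt0.
Proof.
apply: hom_eq => y; rewrite hom_compE cofaceE /=.
case: (unliftP ord0 y) => [y'|] ->; last by rewrite lift_lift0_ord0 !cone_fun0.
by rewrite lift_lift0 !cone_funS hom_compE cofaceE.
Qed.

Lemma coface0_gt0 m M (f : Hom m.+2 M) : (0 < sval (hom_comp f (coface ord0)) ord0)%N.
Proof.
by rewrite hom_compE cofaceE (leq_ltn_trans _ (incrP _ (svalP f) ord0 (lift ord0 ord0) isT)).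
Qed.

Lemma coface_gt0 m M (f : Hom m.+2 M) (i : 'I_m.+2) :
  (0 < sval f ord0)%N -> (0 < sval (hom_comp f (coface i)) ord0)%N.
Proof. by move=> f0_gt0; rewrite hom_compE cofaceE (leq_trans f0_gt0) ?hom_le. Qed.

Lemma cone_coface0_vertex0 m M (f : Hom m.+2 M.+1) (f0 : sval f ord0 = ord0)
    (fi0_gt0 : (0 < sval (hom_comp f (coface ord0)) ord0)%N) :
  cone fi0_gt0 = f.
Proof.
apply: hom_eq => y; case: (unliftP ord0 y) => [y'|] -> /=; last by rewrite cone_fun0 f0.
by rewrite cone_funS hom_compE cofaceE.
Qed.

Lemma double_sum_antisym_eq0 (V : zmodType) N (F : nat -> nat -> V) :
  (forall i j, (i <= j < N)%N -> F j.+1 i = - F i j) ->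
  \sum_(i < N.+1) \sum_(j < N) F i j = 0.
Proof.
elim: N => [|N IHN] FA; first by apply: big1 => i _; rewrite big_ord0.
rewrite big_ord_recr /=; under eq_bigr do rewrite big_ord_recr /=.
rewrite big_split /= IHN => [|i j /andP[ij jN]]; last by apply: FA; rewrite ij ltnW.
rewrite add0r -big_split big1 // => i _ /=.
by rewrite FA ?addrN // ltnSn andbT -ltnS.
Qed.

Section FreeModule.
Variables (k : fieldType) (I : finType).

Definition fbasis (i : I) : {ffun I -> k^o} := [ffun j => (j == i)%:R].

Lemma scale_fbasisE (a : k) i j : (a *: fbasis i) j = a * (j == i)%:R.
Proof. by rewrite !ffunE. Qed.

Definition lin_ext (V : lmodType k) (T : I -> V) (v : {ffun I -> k^o}) : V :=
  \sum_i v i *: T i.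

Lemma lin_ext_is_linear (V : lmodType k) (T : I -> V) : linear (lin_ext T).
Proof.
move=> a x y; rewrite /lin_ext scaler_sumr -big_split; apply: eq_bigr => i _.
by rewrite !ffunE scalerDl scalerA.
Qed.

HB.instance Definition _ (V : lmodType k) (T : I -> V) :=
  GRing.isLinear.Build k {ffun I -> k^o} V *:%R (lin_ext T) (lin_ext_is_linear T).

Section LinExt.
Variables (V : lmodType k).
Implicit Types (T : I -> V) (v : {ffun I -> k^o}).

Lemma lin_ext_basis T i : lin_ext T (fbasis i) = T i.
Proof.
rewrite /lin_ext (bigD1 i) //= ffunE eqxx scale1r big1 ?addr0 // => j /negbTE ji.
by rewrite ffunE ji scale0r.
Qed.

Lemma eq_lin_ext T1 T2 : T1 =1 T2 -> lin_ext T1 =1 lin_ext T2.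
Proof. by move=> T12 v; apply: eq_bigr => i _; rewrite T12. Qed.

Lemma lin_extD T1 T2 v :
  lin_ext (fun i => T1 i + T2 i) v = lin_ext T1 v + lin_ext T2 v.
Proof. by rewrite /lin_ext -big_split; apply: eq_bigr => i _; rewrite scalerDr. Qed.

Lemma lin_extB T1 T2 v :
  lin_ext (fun i => T1 i - T2 i) v = lin_ext T1 v - lin_ext T2 v.
Proof. by rewrite /lin_ext -sumrB; apply: eq_bigr => i _; rewrite scalerBr. Qed.

Lemma lin_ext_const (x : V) v : lin_ext (fun _ => x) v = (\sum_i v i) *: x.
Proof. by rewrite /lin_ext scaler_suml. Qed.

Lemma linear_lin_ext (W : lmodType k) (phi : V -> W) T v :
  linear phi -> phi (lin_ext T v) = lin_ext (phi \o T) v.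
Proof.
move=> phi_lin.
pose phiL : {linear V -> W} := HB.pack phi (GRing.isLinear.Build _ _ _ _ phi phi_lin).
rewrite /lin_ext -[phi]/(phiL : V -> W) linear_sum.
by apply: eq_bigr => i _; rewrite linearZ.
Qed.
End LinExt.

Lemma lin_ext_fbasis (v : {ffun I -> k^o}) : lin_ext fbasis v = v.
Proof.
apply/ffunP => j; rewrite sum_ffunE (bigD1 j) //= scale_fbasisE eqxx mulr1.
by rewrite big1 ?addr0 // => i /negbTE ij; rewrite scale_fbasisE eq_sym ij mulr0.
Qed.

End FreeModule.

Section Representable.
Variable k : fieldType.
Local Notation fbasis := (@fbasis k _).

Lemma Pval_empty n (v w : @Pval k n 0) : v = w.
Proof. by apply/ffunP => f; case: (no_hom_to_empty f). Qed.

Lemma lin_ext_fbasisE (I J : finType) (F : I -> J) (v : {ffun I -> k^o}) j :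
  lin_ext (fbasis \o F) v j = \sum_(i | F i == j) v i.
Proof.
rewrite sum_ffunE [RHS]big_mkcond; apply: eq_bigr => i _.
by rewrite scale_fbasisE eq_sym; case: eqP; rewrite ?mulr1 ?mulr0.
Qed.

Lemma PactE n A B (g : Hom A B) :
  Pact n A B g =1 lin_ext (fun f => fbasis (hom_comp g f)).
Proof.
move=> v; apply/ffunP => h; rewrite ffunE (lin_ext_fbasisE (fun f => hom_comp g f)).
apply: eq_bigl => f; rewrite -hom_eqE.
by apply: eq_forallb => j; rewrite hom_compE eq_sym.
Qed.

Definition bdry n M (f : Hom n.+2 M) : Pval n M :=
  \sum_(i < n.+2) (-1) ^+ i *: fbasis (hom_comp f (coface i)).

Lemma PdE n M : Pd n M =1 lin_ext (@bdry n M).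
Proof.
move=> v; apply/ffunP => h; rewrite !ffunE sum_ffunE; apply: eq_bigr => f _.
rewrite scaler_sumr sum_ffunE big_mkcond; apply: eq_bigr => i _ /=.
have -> : [forall j, sval f (lift i j) == sval h j] = (hom_comp f (coface i) == h).
  by rewrite -hom_eqE; apply: eq_forallb => j; rewrite hom_compE cofaceE.
by rewrite scalerA scale_fbasisE eq_sym; case: eqP; rewrite ?mulr1 ?mulr0 // mulrC.
Qed.

Lemma PepsE M : @Peps k M =1 lin_ext (fun _ => const_mx 1).
Proof. by move=> v; rewrite lin_ext_const; apply/rowP => j; rewrite !mxE mulr1. Qed.

Lemma lin_ext_bdry n M (V : lmodType k) (T : Hom n.+1 M -> V) (f : Hom n.+2 M) :
  lin_ext T (bdry f) = \sum_(i < n.+2) (-1) ^+ i *: T (hom_comp f (coface i)).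
Proof. by rewrite linear_sum; apply: eq_bigr => i _; rewrite linearZ /= lin_ext_basis. Qed.

Lemma Pd_fbasis n M (f : Hom n.+2 M) : Pd n M (fbasis f) = bdry f.
Proof. by rewrite PdE lin_ext_basis. Qed.

Lemma Pd_is_linear n M : linear (@Pd k n M).
Proof. by move=> a x y; rewrite !PdE linearP. Qed.

End Representable.

Section Modules.
Variable k : fieldType.
Local Notation fbasis := (@fbasis k _).

Lemma Pact_lmodule n : is_lmodule (@Pact k n).
Proof.
split=> [A B g a x y | A g g_id x | A B C f g h hE x].
- by rewrite !PactE linearP.
- rewrite PactE -[RHS]lin_ext_fbasis; apply: eq_lin_ext => f /=.
  by congr fbasis; apply: hom_eq => i; rewrite hom_compE g_id.
- rewrite !PactE (linear_lin_ext _ _ (lin_ext_is_linear _)); apply: eq_lin_ext => u /=.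
  by rewrite lin_ext_basis; congr fbasis; apply: hom_eq => i; rewrite !hom_compE hE.
Qed.

Lemma K0val_sum A (x : @K0val k A.+1) : \sum_(i < minn A.+1 1) x ord0 i = x ord0 ord0.
Proof. exact: big_ord1. Qed.

Lemma K0act_lmodule : is_lmodule (@K0act k).
Proof.
rewrite /K0act; split=> [A B g a x y | [|A] g _ x | A [|B] C f g h _ x];
  apply/rowP => j; rewrite ?mxE.
- by rewrite mulr_sumr -big_split; apply: eq_bigr => i _; rewrite !mxE.
- by case: j.
- by rewrite K0val_sum (ord1 j).
- case: A f h x => [|A] f; last case: (no_hom_to_empty f).
  by move=> _ x; rewrite !big_ord0.
- by rewrite K0val_sum mxE.
Qed.

Lemma Pd_hom n : is_hom (@Pact k n.+1) (@Pact k n) (@Pd k n).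
Proof.
split=> [A | A B g x]; first exact: Pd_is_linear.
rewrite !PdE !PactE !(linear_lin_ext _ _ (lin_ext_is_linear _)).
apply: eq_lin_ext => f /=; rewrite lin_ext_basis !lin_ext_bdry.
by apply: eq_bigr => i _; congr (_ *: fbasis _); apply: hom_eq => y; rewrite !hom_compE.
Qed.

Lemma Peps_hom : is_hom (@Pact k 0) (@K0act k) (@Peps k).
Proof.
split=> [A a x y | [|A] B g x]; first by rewrite !PepsE linearP.
- rewrite (Pval_empty x 0) PactE !PepsE !linear0 /=.
  by apply/rowP => j; rewrite !mxE big_ord0.
rewrite PactE PepsE (linear_lin_ext _ _ (lin_ext_is_linear _)) /=.
rewrite (eq_lin_ext (T2 := fun _ => const_mx 1)) => [|f]; last exact: lin_ext_basis.
by rewrite !lin_ext_const; apply/rowP => j; rewrite !mxE K0val_sum PepsE lin_ext_const !mxE.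
Qed.

Lemma Pact_projective n : projective (@Pact k n).
Proof.
move=> M N actM actN [actM_lin _ actM_comp] _ p [p_lin p_nat] p_surj h [h_lin h_nat].
have [x px] := p_surj n.+1 (h n.+1 (fbasis (hom_id n.+1))).
exists (fun A => lin_ext (fun f => actM n.+1 A f x)); split; first split.
- by move=> A; apply: lin_ext_is_linear.
- move=> A B g v; rewrite PactE !(linear_lin_ext _ _ (lin_ext_is_linear _)).
  rewrite (linear_lin_ext _ _ (actM_lin A B g)); apply: eq_lin_ext => f /=.
  by rewrite lin_ext_basis; apply: actM_comp => i; rewrite hom_compE.
- move=> A v; rewrite (linear_lin_ext _ _ (p_lin A)) -[in RHS](lin_ext_fbasis v).
  rewrite (linear_lin_ext _ _ (h_lin A)); apply: eq_lin_ext => f /=.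
  by rewrite p_nat px -h_nat PactE lin_ext_basis hom_comp1.
Qed.

End Modules.

Section Complex.
Variable k : fieldType.
Local Notation fbasis := (@fbasis k _).

Lemma Pd_Pd0 n M (v : @Pval k n.+2 M) : Pd n M (Pd n.+1 M v) = 0.
Proof.
rewrite !PdE (linear_lin_ext _ _ (lin_ext_is_linear _)).
rewrite (eq_lin_ext (T2 := fun _ => 0)) => [|f /=]; first by rewrite lin_ext_const scaler0.
pose F i j := ((-1) ^+ (i + j) : k) *:
  fbasis (hom_comp (hom_comp f (coface (inord i))) (coface (inord j))).
rewrite lin_ext_bdry -[RHS](@double_sum_antisym_eq0 _ n.+2 F) => [|i j /andP[ij jn]].
  apply: eq_bigr => i _; rewrite scaler_sumr; apply: eq_bigr => j _.
  by rewrite scalerA -exprD /F !inord_val.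
rewrite /F addSn exprS addnC mulN1r scaleNr; congr (- (_ *: fbasis _)).
apply: hom_eq => y; rewrite !hom_compE !cofaceE; congr (sval f _); apply: val_inj.
by rewrite /= !inordK ?bump_bumpS //; lia.
Qed.

Lemma Peps_Pd0 M (v : @Pval k 1 M) : Peps M (Pd 0 M v) = 0.
Proof.
rewrite PdE PepsE (linear_lin_ext _ _ (lin_ext_is_linear _)).
rewrite (eq_lin_ext (T2 := fun _ => 0)) => [|f /=]; first by rewrite lin_ext_const scaler0.
by rewrite lin_ext_bdry big_ord_recl big_ord1 expr0 expr1 scale1r scaleN1r subrr.
Qed.
End Complex.

Section Homotopy.
Variable k : fieldType.
Local Notation fbasis := (@fbasis k _).

Definition hcone {m M} (f : Hom m.+1 M.+1) : Pval m.+1 M.+1 :=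
  if insub (cone_fun f) is Some c then fbasis c else 0.

Lemma hcone_cone m M (f : Hom m.+1 M.+1) (f0_gt0 : (0 < sval f ord0)%N) :
  hcone f = fbasis (cone f0_gt0).
Proof.
rewrite /hcone; case: insubP => [c _ cE | ]; last by rewrite cone_fun_incr.
by congr fbasis; apply: val_inj.
Qed.

Lemma hcone_vertex0 m M (f : Hom m.+1 M.+1) : sval f ord0 = ord0 -> hcone f = 0.
Proof. by move=> f0; rewrite /hcone insubF // (negbTE (cone_fun_not_incr f0)). Qed.

Lemma hcone_homotopy_basis m M (f : Hom m.+2 M.+1) :
  Pd m.+1 M.+1 (hcone f) + lin_ext hcone (bdry k f) = fbasis f.
Proof.
rewrite lin_ext_bdry; have [f0|f0_gt0] := posnP (sval f ord0).
  have {}f0 : sval f ord0 = ord0 by apply: val_inj.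
  rewrite (hcone_vertex0 f0) PdE linear0 add0r big_ord_recl big1 => [|i _].
    by rewrite (hcone_cone (coface0_gt0 f)) cone_coface0_vertex0 // expr0 scale1r addr0.
  by rewrite hcone_vertex0 ?scaler0 // hom_compE cofaceE lift_lift0_ord0.
rewrite (hcone_cone f0_gt0) Pd_fbasis /bdry big_ord_recl cone_coface0 expr0 scale1r.
rewrite -addrA -[RHS]addr0 -big_split big1 // => i _.
rewrite (hcone_cone (coface_gt0 i f0_gt0)) -(cone_cofaceS f0_gt0).
by rewrite lift0 exprS mulN1r scaleNr; apply: addNr.
Qed.

Lemma hcone_homotopy0_basis M (f : Hom 1 M.+1) :
  Pd 0 M.+1 (hcone f) = fbasis f - fbasis (vertex0 M).
Proof.
have [f0|f0_gt0] := posnP (sval f ord0).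
  have {}f0 : sval f ord0 = ord0 by apply: val_inj.
  by rewrite (hcone_vertex0 f0) PdE linear0 (vertex0_eq f0) subrr.
rewrite (hcone_cone f0_gt0) Pd_fbasis /bdry big_ord_recl big_ord1 cone_coface0.
rewrite expr0 scale1r lift0 expr1 scaleN1r; congr (_ - fbasis _); apply: vertex0_eq.
by rewrite hom_compE cofaceE lift_lift0_ord0 cone_fun0.
Qed.

Lemma hcone_homotopy m M (v : @Pval k m.+1 M.+1) :
  Pd m.+1 M.+1 (lin_ext hcone v) + lin_ext hcone (Pd m M.+1 v) = v.
Proof.
rewrite (linear_lin_ext _ _ (@Pd_is_linear k _ _)) [Pd m M.+1 v]PdE.
rewrite (linear_lin_ext _ _ (lin_ext_is_linear _)) -lin_extD -[RHS]lin_ext_fbasis.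
by apply: eq_lin_ext => f; apply: hcone_homotopy_basis.
Qed.

Lemma hcone_homotopy0 M (v : @Pval k 0 M.+1) :
  Pd 0 M.+1 (lin_ext hcone v) = v - (\sum_f v f) *: fbasis (vertex0 M).
Proof.
rewrite (linear_lin_ext _ _ (@Pd_is_linear k _ _)) -lin_ext_const.
rewrite -[X in X - _](lin_ext_fbasis v) -lin_extB.
by apply: eq_lin_ext => f; apply: hcone_homotopy0_basis.
Qed.

Lemma Peps_surjective M (y : @K0val k M) : exists v : Pval 0 M, Peps M v = y.
Proof.
case: M y => [|M] y; first by exists 0; apply/rowP => -[].
exists (y ord0 ord0 *: fbasis (vertex0 M)).
by rewrite PepsE linearZ /= lin_ext_basis; apply/rowP => j; rewrite !mxE mulr1 (ord1 j).
Qed.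

Lemma Peps_exact M (v : @Pval k 0 M) :
  Peps M v = 0 -> exists w : Pval 1 M, Pd 0 M w = v.
Proof.
case: M v => [|M] v eps_v; first by exists 0; apply: Pval_empty.
exists (lin_ext hcone v); rewrite hcone_homotopy0.
move/rowP/(_ ord0): eps_v; rewrite PepsE lin_ext_const !mxE mulr1 => ->.
by rewrite scale0r subr0.
Qed.

Lemma Pd_exact n M (v : @Pval k n.+1 M) :
  Pd n M v = 0 -> exists w : Pval n.+2 M, Pd n.+1 M w = v.
Proof.
case: M v => [|M] v dv; first by exists 0; apply: Pval_empty.
by exists (lin_ext hcone v); rewrite -[RHS](hcone_homotopy v) dv linear0 addr0.
Qed.

End Homotopy.

Theorem lemma3p6 (k : fieldType) :
  (* P_n and k_bullet[0] are left k[Delta_{a,inj}]-modules *)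
  (forall n : nat, is_lmodule (@Pact k n)) /\
  is_lmodule (@K0act k) /\
  (* the differentials d : P_{n+1} -> P_n and the augmentation are module morphisms *)
  (forall n : nat, is_hom (@Pact k n.+1) (@Pact k n) (@Pd k n)) /\
  is_hom (@Pact k 0) (@K0act k) (@Peps k) /\
  (* each P_n is projective *)
  (forall n : nat, projective (@Pact k n)) /\
  (* chain complex *)
  (forall n M (v : @Pval k n.+2 M), Pd n M (Pd n.+1 M v) = 0) /\
  (forall M (v : @Pval k 1 M), Peps M (Pd 0 M v) = 0) /\
  (* exactness: eps surjective, ker eps = im d_1, ker d_(n+1) = im d_(n+2) *)
  (forall M (y : @K0val k M), exists v : @Pval k 0 M, Peps M v = y) /\
  (forall M (v : @Pval k 0 M), Peps M v = 0 ->
     exists w : @Pval k 1 M, Pd 0 M w = v) /\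
  (forall n M (v : @Pval k n.+1 M), Pd n M v = 0 ->
     exists w : @Pval k n.+2 M, Pd n.+1 M w = v).
Proof.
split; first exact: Pact_lmodule.
split; first exact: K0act_lmodule.
split; first exact: Pd_hom.
split; first exact: Peps_hom.
split; first exact: Pact_projective.
split; first exact: Pd_Pd0.
split; first exact: Peps_Pd0.
split; first exact: Peps_surjective.
split; first exact: Peps_exact.
exact: Pd_exact.
Qed.
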